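(* For every resource $e$, every nonempty set $S\subseteq[N]$ of players and every permutation $\psi$ of $S$, $$\sum_{i\in S} f_{i,e}\big(S^i(\psi)\cup\{i\}\big)=\sum_{k=1}^{|S|}\Big(\frac{\sigma_e}{k}+\sum_{T\subseteq S,\,|T|=k}\frac{h_e(T)}{\binom{|S|}{k}\cdot k}\Big),$$ where $S^i(\psi)$ is the set of players preceding $i$ in $\psi$ and $f_{i,e}(X)$ denotes the Shapley cost share of player $i\in X$ on $e$ when the set of players using $e$ is $X$.
   Context: Players $i\in[N]$ have weights $w_i(e)\in\mathbb{Z}_{\ge1}$ on resource $e$. Resource $e$ has parameters $\sigma_e\ge0$, $\xi_{e,1},\dots,\xi_{e,q}\ge0$ (at least one positive) and exponents $\alpha_1,\dots,\alpha_q>1$; its cost function is $F_e(0)=0$, $F_e(l)=\sigma_e+\sum_j\xi_{e,j}l^{\alpha_j}$ for $l>0$. Define $h_e(X)=\sum_{j\in[q]}\xi_{e,j}\big(\sum_{i\in X}w_i(e)\big)^{\alpha_j}$ for $X\subseteq[N]$. The Shapley cost share of $i\in X$ on $e$ when $X$ is the set of users of $e$ is $f_{i,e}(X)=\mathbb{E}\big[F_e\big(\sum_{i'\in X^i(\pi)}w_{i'}(e)+w_i(e)\big)-F_e\big(\sum_{i'\in X^i(\pi)}w_{i'}(e)\big)\big]$, where $\pi$ is a uniformly random permutation of $X$ and $X^i(\pi)$ is the set of players preceding $i$ in $\pi$. *)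

From HB Require Import structures.
From mathcomp Require Import all_boot all_order all_algebra.
From mathcomp Require Import all_classical all_reals all_analysis.
Set Implicit Arguments. Unset Strict Implicit. Unset Printing Implicit Defensive.
Import Order.TTheory GRing.Theory Num.Theory.
Local Open Scope ring_scope.

(* One fixed resource e.  Players are 'I_N.  w i = w_i(e) (natural number >= 1),
   sigma = sigma_e, xi j = xi_{e,j}, alpha j = alpha_j, j : 'I_q. *)

Definition load N (w : 'I_N -> nat) (X : {set 'I_N}) : nat := \sum_(i in X) w i.

Definition Fcost (R : realType) q (sigma : R) (xi alpha : 'I_q -> R) (l : nat) : R :=
  if l == 0%N then 0 else sigma + \sum_(j < q) xi j * (l%:R `^ alpha j).

Definition hfun (R : realType) N q (w : 'I_N -> nat) (xi alpha : 'I_q -> R)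
    (X : {set 'I_N}) : R :=
  \sum_(j < q) xi j * ((load w X)%:R `^ alpha j).

Definition preds N (s : seq 'I_N) (i : 'I_N) : {set 'I_N} :=
  [set j in take (index i s) s].

(* Shapley cost share f_{i,e}(X): expectation over a uniformly random permutation
   pi of X (the permutations of X are the orderings in permutations (enum X),
   which are pairwise distinct, |X|! of them) of the marginal cost of i. *)
Definition shapley (R : realType) N q (w : 'I_N -> nat) (sigma : R)
    (xi alpha : 'I_q -> R) (X : {set 'I_N}) (i : 'I_N) : R :=
  (size (permutations (enum X)))%:R^-1 *
  \sum_(pi <- permutations (enum X))
     (Fcost sigma xi alpha (load w (preds pi i) + w i)
      - Fcost sigma xi alpha (load w (preds pi i))).

From HB Require Import structures.
From mathcomp Require Import all_boot all_order all_algebra.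
From mathcomp Require Import all_classical all_reals all_analysis.
From mathcomp Require Import ring.
(* Re-imported so that their lemmas take precedence over the homonymous ones of classical_sets. *)
From mathcomp Require Import fintype finset.
Set Implicit Arguments. Unset Strict Implicit. Unset Printing Implicit Defensive.
Import Order.TTheory GRing.Theory Num.Theory.
Local Open Scope ring_scope.

(* The Shapley cost shares have a potential in the sense of Hart and Mas-Colell:
   with C(T) the cost of coalition T and
     P(X) = sum_(T <= X) (|T|-1)! (|X|-|T|)! / |X|! * C(T),
   the share of i in X is P(X) - P(X \ i).  This is a counting argument: the
   orderings of X in which i is preceded exactly by T are the a ++ i :: b with a
   an ordering of T and b one of X \ (T + i), so there are |T|! (|X|-1-|T|)! of
   them.  Summed along psi, the shares of the players telescope to P(S); grouping
   P(S) by k = |T| and using (k-1)! (n-k)! / n! = 1 / (C(n,k) k) and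
   C(T) = sigma_e + h_e(T) for T nonempty gives the right-hand side. *)

Lemma perm_enumP (T : finType) (s : seq T) (A : {set T}) :
  reflect (uniq s /\ s =i A) (perm_eq s (enum A)).
Proof.
apply: (iffP idP) => [sA | [us sA]].
  by split=> [|x]; rewrite ?(perm_uniq sA) ?(perm_mem sA) ?enum_uniq ?mem_enum.
by apply: uniq_perm; rewrite ?enum_uniq // => x; rewrite mem_enum sA.
Qed.

Lemma sum_subsets_containing (V : nmodType) (I : finType) (X : {set I}) (i : I)
    (F : {set I} -> V) : i \in X ->
  \sum_(T : {set I} | (T \subset X) && (i \in T)) F T =
  \sum_(U : {set I} | U \subset X :\ i) F (i |: U).
Proof.
move=> iX; rewrite (reindex_onto (fun U => i |: U) (fun T => T :\ i)) /=; last first.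
  by move=> T /andP[_ iT]; rewrite setD1K.
apply: eq_bigl => U; rewrite setU11 andbT subUset sub1set iX /=.
rewrite subsetD1; congr (_ && _).
have [iU|iU] := boolP (i \in U); last by rewrite setU1K ?eqxx.
by apply/negbTE; apply: contraTneq iU => <-; rewrite !inE eqxx.
Qed.

Lemma sum_subsets_by_card (V : nmodType) (I : finType) (S : {set I})
    (F : {set I} -> V) :
  \sum_(T : {set I} | T \subset S) F T =
  \sum_(0 <= k < #|S|.+1) \sum_(T : {set I} | (T \subset S) && (#|T| == k)) F T.
Proof.
rewrite big_mkord (partition_big (fun T : {set I} => inord #|T| : 'I_#|S|.+1) xpredT) //.
apply: eq_bigr => k _; apply: eq_bigl => T; case: (boolP (T \subset S)) => //= TS.
by rewrite -val_eqE /= inordK // ltnS subset_leq_card.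
Qed.

Section Preds.
Variable N : nat.
Implicit Types (s a b : seq 'I_N) (i : 'I_N) (X A : {set 'I_N}).

Lemma notin_preds s i : i \notin preds s i.
Proof. by rewrite inE; apply/negP => /index_ltn; rewrite ltnn. Qed.

Lemma preds_subset X s i : perm_eq s (enum X) -> preds s i \subset X :\ i.
Proof.
move=> sX; apply/subsetP => x xP.
rewrite !inE -mem_enum -(perm_mem sX); apply/andP; split.
  by apply: contraTneq xP => ->; apply: notin_preds.
by move: xP; rewrite inE => /mem_take.
Qed.

Lemma preds_pivot a b i : i \notin a -> preds (a ++ i :: b) i = [set x in a].
Proof. by move=> ia; rewrite /preds take_pivot. Qed.

Lemma preds_rcons s x j : j \in s -> preds (rcons s x) j = preds s j.
Proof.
by move=> js; rewrite /preds -cats1 index_cat js takel_cat // ltnW ?index_mem.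
Qed.

Lemma preds_rcons_last s x : x \notin s -> preds (rcons s x) x = [set j in s].
Proof. by move=> xs; rewrite -cats1 preds_pivot. Qed.

Lemma pivot_perm X A i a b : i \in X -> A \subset X :\ i ->
  perm_eq a (enum A) -> perm_eq b (enum (X :\ i :\: A)) ->
  perm_eq (a ++ i :: b) (enum X).
Proof.
move=> iX AX /perm_enumP[ua aA] /perm_enumP[ub bB]; apply/perm_enumP.
have iA : i \notin A by move: AX; rewrite subsetD1 => /andP[].
split.
  rewrite cat_uniq /= ua ub bB !inE eqxx /= negb_or aA iA !andbT.
  by apply/hasPn => x; rewrite bB !inE => /and3P[/negbTE xA _ _]; rewrite aA xA.
move=> x; rewrite mem_cat inE aA bB !inE.
have [/(subsetP AX)|xA] := boolP (x \in A); first by rewrite !inE => /andP[_ ->].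
by case: eqP => [->|]; rewrite ?iX.
Qed.

Lemma perm_pivot X i s : i \in X -> perm_eq s (enum X) ->
  let a := take (index i s) s in let b := drop (index i s).+1 s in
  [/\ s = a ++ i :: b, perm_eq a (enum (preds s i))
    & perm_eq b (enum (X :\ i :\: preds s i))].
Proof.
move=> iX /perm_enumP[us sX] a b.
have i_s : i \in s by rewrite sX.
have sab : s = a ++ i :: b.
  by rewrite -{1}(cat_take_drop (index i s) s) (drop_nth i) ?index_mem ?nth_index.
move: (us); rewrite {1}sab cat_uniq /= => /and4P[ua /norP[_ /hasPn ab] ib ub].
split=> //; apply/perm_enumP; split=> // x; first by rewrite inE.
rewrite !inE -/a -sX sab mem_cat inE.
have [xb|_] := boolP (x \in b); last by case: (x \in a); case: eqP.
have xi : x != i by apply: contraNneq ib => <-.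
by rewrite (ab x xb) xi !orbT.
Qed.

Lemma filter_preds_permutations X A i : i \in X -> A \subset X :\ i ->
  perm_eq [seq s <- permutations (enum X) | preds s i == A]
    [seq a ++ i :: b | a <- permutations (enum A),
                       b <- permutations (enum (X :\ i :\: A))].
Proof.
move=> iX AX; apply: uniq_perm.
- by rewrite filter_uniq ?permutations_uniq.
- apply: allpairs_uniq; rewrite ?permutations_uniq //.
  move=> [a b] [a' b'] /allpairsP[[a1 b1] /= [+ _ [-> ->]]].
  move=> /[swap] /allpairsP[[a2 b2] /= [+ _ [-> ->]]].
  rewrite !mem_permutations => a2A a1A /eqP.
  by rewrite eqseq_cat ?(perm_size a1A) ?(perm_size a2A) // => /andP[/eqP-> /eqP[->]].
move=> s; rewrite mem_filter mem_permutations.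
apply/andP/allpairsP => [[/eqP sA sX] | [[a b] /= []]].
  have [sab aA bB] := perm_pivot iX sX.
  by exists (take (index i s) s, drop (index i s).+1 s); rewrite !mem_permutations -sA.
rewrite !mem_permutations => aA bB ->; split; last exact: pivot_perm aA bB.
have ia : i \notin a by rewrite (perm_mem aA) mem_enum; move: AX; rewrite subsetD1 => /andP[].
by rewrite preds_pivot //; apply/eqP/setP => x; rewrite inE (perm_mem aA) mem_enum.
Qed.

Lemma count_preds_permutations X A i : i \in X -> A \subset X :\ i ->
  count (fun s => preds s i == A) (permutations (enum X)) =
  ((#|A|)`! * (#|X :\ i| - #|A|)`!)%N.
Proof.
move=> iX AX; rewrite -size_filter (perm_size (filter_preds_permutations iX AX)).
by rewrite size_allpairs !size_permutations ?enum_uniq // -!cardE (cardsDS AX).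
Qed.

Lemma sum_permutations_preds (V : nmodType) X i (g : {set 'I_N} -> V) :
  i \in X ->
  \sum_(s <- permutations (enum X)) g (preds s i) =
  \sum_(A : {set 'I_N} | A \subset X :\ i) g A *+ ((#|A|)`! * (#|X :\ i| - #|A|)`!).
Proof.
move=> iX; rewrite big_seq_cond.
rewrite (partition_big (fun s => preds s i) (fun A => A \subset X :\ i)) /=; last first.
  by move=> s /andP[+ _]; rewrite mem_permutations; apply: preds_subset.
apply: eq_bigr => A AX.
rewrite (eq_bigr (fun=> g A)) => [|s /andP[_ /eqP->] //].
rewrite big_const_seq iter_addr_0 -(count_preds_permutations iX AX).
by congr (_ *+ _); apply: eq_in_count => s; rewrite /= mem_permutations andbT => ->.
Qed.

Lemma telescope_preds (V : zmodType) (f : {set 'I_N} -> V) s : uniq s ->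
  \sum_(i <- s) (f (i |: preds s i) - f (preds s i)) = f [set x in s] - f set0.
Proof.
elim/last_ind: s => [|s x IH]; first by rewrite big_nil set_nil subrr.
rewrite rcons_uniq => /andP[xs us]; rewrite big_rcons /= preds_rcons_last //.
rewrite (eq_big_seq (fun i => f (i |: preds s i) - f (preds s i))); last first.
  by move=> j js; rewrite preds_rcons.
have -> : [set j in rcons s x] = x |: [set j in s].
  by apply/setP => j; rewrite !inE mem_rcons inE.
by rewrite IH // addrC addrA subrK.
Qed.
End Preds.

Section Potential.
Variables (R : numFieldType) (I : finType) (c : {set I} -> R).
Implicit Types (X : {set I}) (i : I).
Hypothesis c_set0 : c set0 = 0.

Definition shapley_weight (m k : nat) : R := (k`! * (m - k)`!)%:R / (m.+1)`!%:R.

(* The value at k = 0 is junk: it only ever multiplies c set0 = 0. *)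
Definition potential_coef (n k : nat) : R := (k.-1`! * (n - k)`!)%:R / n`!%:R.

Definition potential (X : {set I}) : R :=
  \sum_(T : {set I} | T \subset X) potential_coef #|X| #|T| * c T.

Lemma potential_coefSS m k : potential_coef m.+1 k.+1 = shapley_weight m k.
Proof. by rewrite /potential_coef subSS. Qed.

Lemma potential_coefBS m k : (0 < k <= m)%N ->
  potential_coef m k - potential_coef m.+1 k = shapley_weight m k.
Proof.
case: k => // k /andP[_ km]; have [j ->] : exists j, m = (k.+1 + j)%N.
  by exists (m - k.+1)%N; rewrite subnKC.
rewrite /potential_coef /shapley_weight /= !subSS addKn addSnnS addKn.
rewrite [(k + j.+1).+1`!]factS [j.+1`!]factS [k.+1`!]factS !natrM -addnS natrD.
have fact_neq0 n : n`!%:R != 0 :> R by rewrite pnatr_eq0 -lt0n fact_gt0.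
rewrite -!natr1; field.
by rewrite fact_neq0 !natr1 -natrD pnatr_eq0 addnS.
Qed.

Lemma potential_coef_binom n k : (0 < k <= n)%N ->
  potential_coef n k = ('C(n, k)%:R * k%:R)^-1.
Proof.
case: k => // k /andP[_ kn]; rewrite /potential_coef /= -(bin_fact kn) factS.
have nat_neq0 l : (0 < l)%N -> l%:R != 0 :> R by rewrite pnatr_eq0 -lt0n.
rewrite !natrM; field.
by rewrite addrC natr1 !nat_neq0 ?bin_gt0 ?fact_gt0.
Qed.

Lemma potential_set0 : potential set0 = 0.
Proof. by rewrite /potential big1 // => T; rewrite subset0 => /eqP->; rewrite c_set0 mulr0. Qed.

Lemma potential_splitD1 X i : i \in X ->
  potential X = \sum_(U : {set I} | U \subset X :\ i)
    (potential_coef #|X| #|U|.+1 * c (i |: U) + potential_coef #|X| #|U| * c U).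
Proof.
move=> iX; rewrite /potential (bigID (fun T : {set I} => i \in T)) /= sum_subsets_containing //.
rewrite big_split; congr (_ + _); last by apply: eq_bigl => T; rewrite subsetD1.
apply: eq_bigr => U UX; congr (potential_coef _ _ * _).
by move: UX; rewrite subsetD1 cardsU1 => /andP[_ ->].
Qed.

Lemma potentialD1 X i : i \in X ->
  potential X - potential (X :\ i) =
  \sum_(U : {set I} | U \subset X :\ i) shapley_weight #|X :\ i| #|U| * (c (i |: U) - c U).
Proof.
move=> iX; rewrite (potential_splitD1 iX) /potential -sumrB.
apply: eq_bigr => U UX; rewrite (cardsD1 i X) iX add1n potential_coefSS.
have [U0|Upos] := posnP #|U|.
  by move/eqP: U0; rewrite cards_eq0 => /eqP->; rewrite c_set0 !mulr0 !subr0 addr0.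
rewrite -(potential_coefBS (m := #|X :\ i|)) ?Upos ?subset_leq_card //; ring.
Qed.

Lemma potential_by_card S :
  potential S = \sum_(1 <= k < #|S|.+1)
    \sum_(T : {set I} | (T \subset S) && (#|T| == k)) c T / ('C(#|S|, k)%:R * k%:R).
Proof.
rewrite /potential sum_subsets_by_card big_ltn // big1 ?add0r => [|T /andP[_]]; last first.
  by rewrite cards_eq0 => /eqP->; rewrite c_set0 mulr0.
apply: eq_big_nat => k kS; apply: eq_bigr => T /andP[_ /eqP->].
by rewrite potential_coef_binom 1?mulrC // -ltnS.
Qed.
End Potential.

Section ShapleyCost.
Variables (R : realType) (N q : nat) (w : 'I_N -> nat) (sigma : R)
  (xi alpha : 'I_q -> R).
Implicit Types (T X S : {set 'I_N}) (i : 'I_N) (s : seq 'I_N).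

Definition coalition_cost (T : {set 'I_N}) : R := Fcost sigma xi alpha (load w T).

Lemma coalition_cost_set0 : coalition_cost set0 = 0.
Proof. by rewrite /coalition_cost /load big_set0. Qed.

Lemma load_setU1 i T : i \notin T -> load w (i |: T) = (load w T + w i)%N.
Proof. by move=> iT; rewrite /load big_setU1 //= addnC. Qed.

Lemma coalition_cost_nonempty T : (forall i, 0 < w i)%N -> T != set0 ->
  coalition_cost T = sigma + hfun w xi alpha T.
Proof.
move=> w_gt0 /set0Pn[i iT]; rewrite /coalition_cost /Fcost /hfun.
by rewrite /load (bigD1 i) //= addn_eq0 eqn0Ngt w_gt0.
Qed.

Lemma shapleyE X i : i \in X ->
  shapley w sigma xi alpha X i =
  \sum_(T : {set 'I_N} | T \subset X :\ i)
    shapley_weight R #|X :\ i| #|T| * (coalition_cost (i |: T) - coalition_cost T).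
Proof.
move=> iX; rewrite /shapley size_permutations ?enum_uniq // -cardE.
rewrite (eq_bigr (fun s => coalition_cost (i |: preds s i) - coalition_cost (preds s i))).
  rewrite (sum_permutations_preds (fun T => coalition_cost (i |: T) - coalition_cost T)) //.
  rewrite mulr_sumr; apply: eq_bigr => T _.
  by rewrite (cardsD1 i X) iX /shapley_weight -[(_ - _) *+ _]mulr_natl mulrA [_^-1 * _]mulrC.
by move=> s _; rewrite /coalition_cost load_setU1 ?notin_preds.
Qed.

Lemma shapley_potential X i : i \in X ->
  shapley w sigma xi alpha X i =
  potential coalition_cost X - potential coalition_cost (X :\ i).
Proof. by move=> iX; rewrite potentialD1 ?coalition_cost_set0 // shapleyE. Qed.

Lemma sum_shapley_preds s : uniq s ->
  \sum_(i <- s) shapley w sigma xi alpha (preds s i :|: [set i]) i =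
  potential coalition_cost [set x in s].
Proof.
move=> us; have := telescope_preds (potential coalition_cost) us.
rewrite potential_set0 ?coalition_cost_set0 // subr0 => <-.
apply: eq_bigr => i _; rewrite setUC shapley_potential ?setU11 //.
by rewrite setU1K ?notin_preds.
Qed.

Lemma potential_coalition_cost S : (forall i, 0 < w i)%N ->
  potential coalition_cost S =
  \sum_(1 <= k < #|S|.+1)
     (sigma / k%:R +
      \sum_(T : {set 'I_N} | (T \subset S) && (#|T| == k))
         hfun w xi alpha T / ('C(#|S|, k)%:R * k%:R)).
Proof.
move=> w_gt0; rewrite potential_by_card ?coalition_cost_set0 //.
apply: eq_big_nat => k /andP[k_gt0 kS]; rewrite ltnS in kS.
rewrite (eq_bigr (fun T => sigma / ('C(#|S|, k)%:R * k%:R) +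
                            hfun w xi alpha T / ('C(#|S|, k)%:R * k%:R))); last first.
  move=> T /andP[_ /eqP Tk]; rewrite coalition_cost_nonempty ?mulrDl //.
  by rewrite -card_gt0 Tk.
rewrite big_split /=; congr (_ + _).
rewrite (eq_bigl (mem [set T : {set 'I_N} | (T \subset S) && (#|T| == k)])) => [|T].
  rewrite sumr_const cards_draws -mulr_natr.
  have nat_neq0 l : (0 < l)%N -> l%:R != 0 :> R by rewrite pnatr_eq0 -lt0n.
  by field; rewrite !nat_neq0 ?bin_gt0.
by rewrite !inE.
Qed.
End ShapleyCost.

Theorem lemma7p1 (R : realType) (N q : nat) (w : 'I_N -> nat) (sigma : R)
    (xi alpha : 'I_q -> R)
    (hw : forall i, (1 <= w i)%N)
    (hsigma : 0 <= sigma)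
    (hxi : forall j, 0 <= xi j)
    (hxi_pos : exists j, 0 < xi j)
    (halpha : forall j, 1 < alpha j)
    (S : {set 'I_N}) (hS : (0 < #|S|)%N)
    (psi : seq 'I_N) (hpsi : perm_eq psi (enum S)) :
  \sum_(i in S) shapley w sigma xi alpha (preds psi i :|: [set i]) i =
  \sum_(1 <= k < #|S|.+1)
     (sigma / k%:R +
      \sum_(T : {set 'I_N} | (T \subset S) && (#|T| == k))
         hfun w xi alpha T / ('C(#|S|, k)%:R * k%:R)).
Proof.
have /perm_enumP[psi_uniq psiS] := hpsi.
rewrite -big_enum -(perm_big _ hpsi) /= sum_shapley_preds //.
have -> : [set x in psi] = S by apply/setP => x; rewrite inE psiS.
exact: potential_coalition_cost.
Qed.
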